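(* Let $n\in\mathbb N$, $\psi_1,\dots,\psi_n\in\bar P_0\mathcal H$ and $E_1,\dots,E_n\in\mathbb C$ be such that $E_1=\langle\psi_0,V\psi_0\rangle$, for all $2\le m\le n$ $$E_m=-\sum_{k=2}^{m}\sum_{\substack{j_1+\dots+j_k=m\\ j_s\ge1}}\Big\langle\psi_0,(E_{j_1}-\delta_{1j_1}V)\prod_{s=2}^{k}\Big\{(H_0-E_0)^{-1}\bar P_0(E_{j_s}-\delta_{1j_s}V)\Big\}\psi_0\Big\rangle,$$ and for all $1\le m\le n$ $$\psi_m=\sum_{k=1}^{m}\sum_{\substack{j_1+\dots+j_k=m\\ j_s\ge1}}\prod_{s=1}^{k}\Big\{(H_0-E_0)^{-1}\bar P_0(E_{j_s}-\delta_{1j_s}V)\Big\}\psi_0,$$ where it is assumed that all expressions on the right-hand sides are well defined (every vector to which $V$ is applied lies in ${\rm dom}(V)$, every vector to which $(H_0-E_0)^{-1}\bar P_0$ is applied lies in its domain). Then for all $m\in\{1,\dots,n\}$ $$H_0\psi_m+V\psi_{m-1}=\sum_{k=0}^{m}E_k\psi_{m-k}.$$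
   Context: Let $H_0$ and $V$ be self-adjoint operators in a Hilbert space $\mathcal H$ with $V$ $H_0$-bounded, and let $\psi_0$ be a normalized vector with $H_0\psi_0=E_0\psi_0$ and $\ker(H_0-E_0)=\mathbb C\psi_0$. $P_0$ is the orthogonal projection onto $\mathbb C\psi_0$, $\bar P_0=1-P_0$. The operator $(H_0-E_0)^{-1}\bar P_0$ maps a vector $\xi$ to the unique $\chi\in{\rm dom}(H_0)\cap\bar P_0\mathcal H$ with $(H_0-E_0)\chi=\bar P_0\xi$; its domain consists of those $\xi$ for which such $\chi$ exists. $\delta_{ij}$ is the Kronecker delta. *)

From HB Require Import structures.
From mathcomp Require Import all_boot all_order all_algebra.
From Stdlib Require Import ClassicalEpsilon.
Set Implicit Arguments. Unset Strict Implicit. Unset Printing Implicit Defensive.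
Import Order.TTheory GRing.Theory Num.Theory.
Local Open Scope ring_scope.

(* Complex Hilbert space: an lmodType V over a numeric closed field C   *)
(* (the complex numbers), with an inner product <.,.> antilinear in    *)
(* the first and linear in the second argument (physics convention),   *)

Section Hilbert.
Variables (C : numClosedFieldType) (V : lmodType C).
Variable ip : V -> V -> C.

Definition inner_product_axioms : Prop :=
  [/\ (forall x y, ip x y = (ip y x)^*),
      (forall a x y z, ip x (a *: y + z) = a * ip x y + ip x z),
      (forall x, 0 <= ip x x) &
      (forall x, ip x x = 0 -> x = 0)].

Definition hnorm (x : V) : C := sqrtC (ip x x).

Definition cauchy_seq (u : nat -> V) : Prop :=
  forall eps : C, 0 < eps -> exists N, forall p q, (N <= p)%N -> (N <= q)%N ->
    hnorm (u p - u q) < eps.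

Definition converges_to (u : nat -> V) (l : V) : Prop :=
  forall eps : C, 0 < eps -> exists N, forall p, (N <= p)%N -> hnorm (u p - l) < eps.

Definition complete : Prop :=
  forall u, cauchy_seq u -> exists l, converges_to u l.

Definition hilbert_space : Prop := inner_product_axioms /\ complete.

(* Partially defined operators: a domain and an action (only meaningful on the domain). *)
Record pop := POp { dom : V -> Prop; app : V -> V }.

Definition linear_op (T : pop) : Prop :=
  [/\ dom T 0,
      (forall x y, dom T x -> dom T y -> dom T (x + y) /\ app T (x + y) = app T x + app T y) &
      (forall a x, dom T x -> dom T (a *: x) /\ app T (a *: x) = a *: app T x)].

Definition dense (D : V -> Prop) : Prop :=
  forall x (eps : C), 0 < eps -> exists d, D d /\ hnorm (x - d) < eps.

(* T is self-adjoint: densely defined linear operator with T^* = T, where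
   y \in dom T^* with T^* y = z  iff  <T x, y> = <x, z> for all x \in dom T. *)
Definition self_adjoint (T : pop) : Prop :=
  [/\ linear_op T, dense (dom T) &
      forall y z, (forall x, dom T x -> ip (app T x) y = ip x z) <->
                  (dom T y /\ z = app T y)].

Definition rel_bounded (W H : pop) : Prop :=
  (forall x, dom H x -> dom W x) /\
  exists a b : C, [/\ 0 <= a, 0 <= b &
    forall x, dom H x -> hnorm (app W x) <= a * hnorm (app H x) + b * hnorm x].

Variables (H0 W : pop) (psi0 : V) (E0 : C).

Definition P0 (x : V) : V := ip psi0 x *: psi0.
Definition Pbar0 (x : V) : V := x - P0 x.

(* chi = (H0 - E0)^{-1} Pbar0 xi *)
Definition Rres (xi chi : V) : Prop :=
  [/\ dom H0 chi, Pbar0 chi = chi & app H0 chi - E0 *: chi = Pbar0 xi].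

Definition pdec (P : Prop) : {P} + {~ P} := excluded_middle_informative P.

(* (H0 - E0)^{-1} Pbar0 as a partial function (None outside its domain). *)
Definition Rinv (xi : V) : option V :=
  match pdec (exists chi, Rres xi chi) with
  | left h => Some (proj1_sig (constructive_indefinite_description _ h))
  | right _ => None
  end.

Variable E : nat -> C.

(* (E_j - delta_{1j} V) x, None if V is applied outside its domain. *)
Definition Bop (j : nat) (x : V) : option V :=
  if j == 1%N then
    (if pdec (dom W x) then Some (E 1 *: x - app W x) else None)
  else Some (E j *: x).

(* (H0 - E0)^{-1} Pbar0 (E_j - delta_{1j} V) *)
Definition Aop (j : nat) (x : V) : option V := obind Rinv (Bop j x).

(* prod_{s=1}^k A_{j_s} x  =  A_{j_1} (A_{j_2} ( ... A_{j_k} x)) *)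
Definition chain (js : seq nat) (x : V) : option V :=
  foldr (fun j o => obind (Aop j) o) (Some x) js.

(* (E_{j_1} - delta V) prod_{s=2}^k A_{j_s} psi0 *)
Definition termE (js : seq nat) : option V :=
  match js with
  | j1 :: rest => obind (Bop j1) (chain rest psi0)
  | [::] => None
  end.

End Hilbert.

Definition is_comp (m : nat) (s : seq nat) : bool :=
  all (fun j => 0 < j)%N s && (sumn s == m).

(** Write [A_j = (H0 - E0)^{-1} P̄0 (E_j - δ_{1j} V)]. Grouping the compositions of [m]
    by their first part [j], every term of [ψ_m] is [A_j χ] for a term [χ] of [ψ_{m-j}];
    applying [H0 - E0] termwise gives [(H0 - E0) ψ_m = P̄0 ξ_m] with
    [ξ_m = Σ_{j=1}^m E_j ψ_{m-j} - V ψ_{m-1}]. In [⟨ψ0, ξ_m⟩] the one-part composition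
    [(m)] contributes [E_m] and all the others contribute [-E_m] by the recursion
    defining [E_m], so [P̄0 ξ_m = ξ_m] and the equation of order [m] follows. *)

From HB Require Import structures.
From mathcomp Require Import all_boot all_order all_algebra zify.
From Stdlib Require Import ClassicalEpsilon.
Import Order.TTheory GRing.Theory Num.Theory.
Local Open Scope ring_scope.
Set Implicit Arguments. Unset Strict Implicit.

Lemma is_comp_nil m : is_comp m [::] = (m == 0%N).
Proof. by rewrite /is_comp eq_sym. Qed.

Lemma is_comp_cons r j s :
  is_comp r (j :: s) = [&& (0 < j)%N, (j <= r)%N & is_comp (r - j) s].
Proof.
rewrite /is_comp /=; case: (0 < j)%N => //=; case: (all _ s); last by rewrite !andbF.
apply/eqP/andP => [<-|[le_jr /eqP ->]]; last by rewrite subnKC.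
by rewrite leq_addr addKn eqxx.
Qed.

Lemma is_comp_size m s : (0 < m)%N -> is_comp m s -> (0 < size s <= m)%N.
Proof.
move=> m_gt0 /andP[pos_s /eqP sum_s]; rewrite -sum_s in m_gt0 *.
have: (size s <= sumn s)%N.
  by elim: s pos_s {m_gt0 sum_s} => //= j s IHs /andP[j_gt0 /IHs]; lia.
by case: s m_gt0 {pos_s sum_s} => [|j s] /=; lia.
Qed.

Lemma comp_tuple m s : is_comp m s ->
  exists t : (size s).-tuple 'I_m.+1, map val t = s.
Proof.
case/andP=> _ /eqP sum_s.
have s_small j : j \in s -> (j < m.+1)%N.
  rewrite ltnS -sum_s; elim: (s) => //= i l IHl.
  by rewrite in_cons => /orP[/eqP ->|/IHl]; [rewrite leq_addr|lia].
exists (map_tuple inord (in_tuple s)); rewrite /= -map_comp -[RHS]map_id.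
by apply/eq_in_map => j j_s /=; rewrite inordK ?s_small.
Qed.

Section Compositions.
Variable R : zmodType.

Fixpoint compsum (k r : nat) (F : seq nat -> R) : R :=
  match k with
  | 0%N => if r == 0%N then F [::] else 0
  | k.+1 => \sum_(1 <= j < r.+1) compsum k (r - j) (fun s => F (j :: s))
  end.

Definition compsum_all (r : nat) (F : seq nat -> R) : R :=
  \sum_(0 <= k < r.+1) compsum k r F.

Lemma sum_tuple0 (T : finType) (h : 0.-tuple T -> R) :
  \sum_(t : 0.-tuple T) h t = h [tuple].
Proof.
rewrite (eq_bigr (fun _ => h [tuple])) => [|t _]; last by rewrite tuple0.
by rewrite sumr_const card_tuple expn0.
Qed.

Lemma sum_tupleS (T : finType) k (h : k.+1.-tuple T -> R) :
  \sum_(t : k.+1.-tuple T) h t =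
  \sum_(x : T) \sum_(t : k.-tuple T) h [tuple of x :: t].
Proof.
rewrite pair_big (reindex (fun p : T * k.-tuple T => [tuple of p.1 :: p.2])) //=.
exists (fun t => (thead t, [tuple of behead t])) => [[x t] _|t _].
  by congr pair; apply: val_inj.
by apply: val_inj; rewrite /= [t]tuple_eta.
Qed.

Lemma compsum_tuple N k r (F : seq nat -> R) : (r < N)%N ->
  \sum_(t : k.-tuple 'I_N | is_comp r (map val t)) F (map val t) = compsum k r F.
Proof.
elim: k r F => [|k IHk] r F r_lt_N; rewrite big_mkcond.
  by rewrite sum_tuple0 /is_comp /=; case: r {r_lt_N}.
rewrite sum_tupleS /= (eq_bigr (fun j : 'I_N =>
    if (0 < j <= r)%N then compsum k (r - j) (fun s => F (val j :: s)) else 0)).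
  rewrite -(big_mkord xpredT (fun j => if (0 < j <= r)%N then
      compsum k (r - j) (fun s => F (j :: s)) else 0)).
  rewrite big_ltn ?(leq_ltn_trans _ r_lt_N) //= add0r.
  rewrite (big_nat_widen 1 r.+1 N) // [RHS]big_mkcond.
  by apply: eq_big_nat => j /andP[j_gt0 _]; rewrite j_gt0 ltnS.
move=> j _; case: ifP => j_ok.
  rewrite -IHk ?(leq_ltn_trans (leq_subr _ _)) // [RHS]big_mkcond.
  by apply: eq_bigr => t _; rewrite is_comp_cons andbA j_ok.
by apply: big1 => t _; rewrite is_comp_cons andbA j_ok.
Qed.

Lemma compsum_eq0 k r F : (r < k)%N -> compsum k r F = 0.
Proof.
elim: k r F => [|k IHk] r F //= r_lt_k.
by rewrite big_nat_cond big1 // => j /andP[/andP[j_gt0 j_le_r] _]; apply: IHk; lia.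
Qed.

Lemma compsum1 r F : (0 < r)%N -> compsum 1 r F = F [:: r].
Proof.
move=> r_gt0 /=; rewrite big_nat_recr //= subnn big_nat_cond big1 ?add0r //.
by move=> j /andP[/andP[_ j_lt_r] _]; rewrite ifN //; lia.
Qed.

Lemma compsum_all0 F : compsum_all 0 F = F [::].
Proof. by rewrite /compsum_all big_nat1. Qed.

Lemma eq_compsum k r F G : (forall s, is_comp r s -> F s = G s) ->
  compsum k r F = compsum k r G.
Proof.
elim: k r F G => [|k IHk] r F G eqFG /=; first by case: r eqFG => // eqFG; rewrite eqFG.
apply: eq_big_nat => j /andP[j_gt0 j_le_r]; apply: IHk => s comp_s.
by apply: eqFG; rewrite is_comp_cons comp_s j_gt0 -ltnS j_le_r.
Qed.

Lemma eq_compsum_all r F G : (forall s, is_comp r s -> F s = G s) ->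
  compsum_all r F = compsum_all r G.
Proof. by move=> eqFG; apply: eq_bigr => k _; apply: eq_compsum. Qed.

Lemma compsum_all_first r F : (0 < r)%N ->
  compsum_all r F = \sum_(1 <= j < r.+1) compsum_all (r - j) (fun s => F (j :: s)).
Proof.
move=> r_gt0; rewrite /compsum_all big_ltn //= ifN -?lt0n // add0r.
rewrite big_add1 /= exchange_big_nat /=; apply: eq_big_nat => j /andP[j_gt0 j_le_r].
rewrite (big_cat_nat (n := (r - j).+1)) /=; [|done|lia].
rewrite [X in _ + X]big_nat_cond [X in _ + X]big1 ?addr0 //.
by move=> k /andP[/andP[? _] _]; apply: compsum_eq0; lia.
Qed.

End Compositions.

Section AdditiveOnDomain.
Variables (U1 U2 : zmodType) (D : U1 -> Prop) (f : U1 -> U2).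
Hypotheses (D0 : D 0) (f0 : f 0 = 0)
  (fD : forall x y, D x -> D y -> D (x + y) /\ f (x + y) = f x + f y).

Lemma big_additive_on I (r : seq I) (P : pred I) (G : I -> U1) :
  (forall i, P i -> D (G i)) ->
  D (\sum_(i <- r | P i) G i) /\ f (\sum_(i <- r | P i) G i) = \sum_(i <- r | P i) f (G i).
Proof.
move=> DG; apply: (big_ind2 (fun x y => D x /\ f x = y)) => //.
  by move=> x _ y _ [Dx <-] [Dy <-]; apply: fD.
by move=> i /DG.
Qed.

Lemma compsum_additive_on k r F : (forall s, is_comp r s -> D (F s)) ->
  D (compsum k r F) /\ f (compsum k r F) = compsum k r (fun s => f (F s)).
Proof.
elim: k r F => [|k IHk] r F DF /=; first by case: r DF => [|r] DF //=; split => //; apply: DF.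
have IHj j : j \in index_iota 1 r.+1 ->
    D (compsum k (r - j) (fun s => F (j :: s))) /\
    f (compsum k (r - j) (fun s => F (j :: s))) =
    compsum k (r - j) (fun s => f (F (j :: s))).
  rewrite mem_index_iota => /andP[j_gt0 j_le_r]; apply: IHk => s comp_s.
  by apply: DF; rewrite is_comp_cons comp_s j_gt0 -ltnS j_le_r.
rewrite big_seq [in RHS]big_seq.
have [Dsum ->] := big_additive_on (index_iota 1 r.+1) (fun j j_ok => proj1 (IHj j j_ok)).
by split => //; apply: eq_bigr => j j_ok; rewrite (proj2 (IHj j j_ok)).
Qed.

Lemma compsum_all_additive_on r F : (forall s, is_comp r s -> D (F s)) ->
  D (compsum_all r F) /\ f (compsum_all r F) = compsum_all r (fun s => f (F s)).
Proof.
move=> DF; have [Dsum ->] := big_additive_on (index_iota 0 r.+1) (P := xpredT)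
  (fun k _ => proj1 (compsum_additive_on k DF)).
by split => //; apply: eq_bigr => k _; rewrite (proj2 (compsum_additive_on k DF)).
Qed.

End AdditiveOnDomain.

Lemma compsum_all_additive (U1 U2 : zmodType) (f : U1 -> U2) r F :
  f 0 = 0 -> {morph f : x y / x + y} ->
  f (compsum_all r F) = compsum_all r (fun s => f (F s)).
Proof.
move=> f0 fD.
by have [_ ->] := compsum_all_additive_on (D := fun _ => True) I f0
  (fun x y _ _ => conj I (fD x y)) (F := F) (r := r) (fun _ _ => I).
Qed.

Lemma linear_op_app0 (C : numClosedFieldType) (V : lmodType C) (T : pop V) :
  linear_op T -> app T 0 = 0.
Proof. by case=> T0 _ /(_ 0 0 T0)[_]; rewrite !scale0r. Qed.

Section InnerProduct.
Variables (C : numClosedFieldType) (V : lmodType C) (ip : V -> V -> C).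
Hypothesis ip_linear : forall a x y z, ip x (a *: y + z) = a * ip x y + ip x z.

Lemma ip0r x : ip x 0 = 0.
Proof.
have := ip_linear 1 x 0 0; rewrite scale1r addr0 mul1r => ip_x0_twice.
by apply: (addrI (ip x 0)); rewrite addr0 -ip_x0_twice.
Qed.

Lemma ipDr x : {morph ip x : y z / y + z}.
Proof. by move=> y z; rewrite -{1}[y]scale1r ip_linear mul1r. Qed.

Lemma ipZr x a y : ip x (a *: y) = a * ip x y.
Proof. by rewrite -[a *: y]addr0 ip_linear ip0r addr0. Qed.

Lemma ipNr x : {morph ip x : y / - y}.
Proof. by move=> y; rewrite -scaleN1r ipZr mulN1r. Qed.

Lemma Pbar0_0 psi0 : Pbar0 ip psi0 0 = 0.
Proof. by rewrite /Pbar0 /P0 ip0r scale0r subr0. Qed.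

Lemma Pbar0D psi0 : {morph Pbar0 ip psi0 : x y / x + y}.
Proof. by move=> x y; rewrite /Pbar0 /P0 ipDr scalerDl opprD addrACA. Qed.

Lemma Pbar0_id psi0 x : ip psi0 x = 0 -> Pbar0 ip psi0 x = x.
Proof. by rewrite /Pbar0 /P0 => ->; rewrite scale0r subr0. Qed.

End InnerProduct.

Section PerturbationSeries.
Variables (C : numClosedFieldType) (V : lmodType C) (ip : V -> V -> C)
  (H0 W : pop V) (psi0 : V) (E : nat -> C).
Hypotheses (H0_linear : linear_op H0) (W_linear : linear_op W)
  (ip_linear : forall a x y z, ip x (a *: y + z) = a * ip x y + ip x z).

Local Notation E0 := (E 0%N).
Local Notation Rres := (Rres ip H0 psi0 E0).
Local Notation chain s := (chain ip H0 W psi0 E0 E s psi0).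

(* [term s] is the product of the [A_{j_s}] applied to [ψ0], and [source (j :: s)]
   is the vector [(E_j - δ_{1j} V) term s] to which [(H0 - E0)^{-1} P̄0] is applied. *)
Let term s := odflt 0 (chain s).
Let source s := odflt 0 (termE ip H0 W psi0 E0 E s).
Let defined m := forall s, is_comp m s -> chain s <> None.

Lemma Rinv_spec xi chi : Rinv ip H0 psi0 E0 xi = Some chi -> Rres xi chi.
Proof.
rewrite /Rinv; case: pdec => // ex_chi [<-].
exact: proj2_sig (constructive_indefinite_description _ ex_chi).
Qed.

Lemma chain_cons_spec j s : chain (j :: s) <> None ->
  [/\ Rres (source (j :: s)) (term (j :: s)),
      source (j :: s) = E j *: term s - (if j == 1%N then app W (term s) else 0) &
      (j == 1%N -> dom W (term s))].
Proof.
rewrite /source /term /termE /=; case: (chain s) => [y|] //=.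
rewrite /Aop /Bop; case: (j =P 1%N) => [->|_] /=; last first.
  by case Rinv_y: Rinv => [chi|] // _; rewrite subr0; split => //; apply: Rinv_spec.
case: pdec => //= Wy; case Rinv_y: Rinv => [chi|] // _.
by split => //; apply: Rinv_spec.
Qed.

Lemma compsum_all_resolvent m : defined m -> (0 < m)%N ->
  dom H0 (compsum_all m term) /\
  app H0 (compsum_all m term) - E0 *: compsum_all m term =
    Pbar0 ip psi0 (compsum_all m source).
Proof.
move=> def_m m_gt0.
have term_spec s : is_comp m s -> Rres (source s) (term s).
  case: s => [|j s] comp_s; first by move: comp_s m_gt0; rewrite is_comp_nil => /eqP->.
  by case: (chain_cons_spec (def_m _ comp_s)).
have [H0_dom0 H0_add _] := H0_linear.
have H0_shift_add x y : dom H0 x -> dom H0 y ->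
    dom H0 (x + y) /\ app H0 (x + y) - E0 *: (x + y) =
    (app H0 x - E0 *: x) + (app H0 y - E0 *: y).
  move=> Hx Hy; have [Hxy ->] := H0_add x y Hx Hy.
  by rewrite scalerDr opprD addrACA.
have H0_shift0 : app H0 0 - E0 *: 0 = 0 by rewrite linear_op_app0 // scaler0 subr0.
have [dom_sum ->] := compsum_all_additive_on H0_dom0 H0_shift0 H0_shift_add
  (fun s comp_s => let: And3 Hs _ _ := term_spec s comp_s in Hs).
split => //.
rewrite (compsum_all_additive _ _ (Pbar0_0 ip_linear psi0) (Pbar0D ip_linear psi0)).
by apply: eq_compsum_all => s /term_spec[].
Qed.

Lemma compsum_all_source_cons m j : defined m -> (1 <= j < m.+1)%N ->
  compsum_all (m - j) (fun s => source (j :: s)) =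
  E j *: compsum_all (m - j) term -
    (if j == 1%N then app W (compsum_all (m - j) term) else 0).
Proof.
move=> def_m /andP[j_gt0]; rewrite ltnS => j_le_m; have [W_dom0 W_add _] := W_linear.
have comp_cons s : is_comp (m - j) s -> is_comp m (j :: s).
  by move=> comp_s; rewrite is_comp_cons comp_s j_gt0 j_le_m.
pose Dj x := j == 1%N -> dom W x.
pose fj x := E j *: x - (if j == 1%N then app W x else 0).
have fj_add x y : Dj x -> Dj y -> Dj (x + y) /\ fj (x + y) = fj x + fj y.
  rewrite /Dj /fj; case: (j == 1%N) => Dx Dy; last by rewrite !subr0 scalerDr.
  have [Dxy ->] := W_add _ _ (Dx erefl) (Dy erefl).
  by split=> [_ //|]; rewrite scalerDr opprD addrACA.
have fj0 : fj 0 = 0 by rewrite /fj linear_op_app0 // scaler0 if_same subr0.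
have [_ fj_sum] := compsum_all_additive_on (D := Dj) (fun _ => W_dom0) fj0 fj_add (F := term)
  (fun s comp_s => let: And3 _ _ Ws := chain_cons_spec (def_m _ (comp_cons s comp_s)) in Ws).
rewrite -/(fj _) fj_sum.
by apply: eq_compsum_all => s /comp_cons/def_m/chain_cons_spec[].
Qed.

Lemma compsum_all_source m : defined m -> (0 < m)%N ->
  compsum_all m source =
  \sum_(1 <= j < m.+1) E j *: compsum_all (m - j) term - app W (compsum_all m.-1 term).
Proof.
move=> def_m m_gt0; rewrite compsum_all_first //.
rewrite (eq_big_nat _ _ (fun j => compsum_all_source_cons (j := j) def_m)) sumrB; congr (_ - _).
rewrite big_ltn // eqxx subn1 big_nat_cond big1 ?addr0 //.
by move=> j /andP[/andP[j_gt1 _] _]; rewrite gtn_eqF.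
Qed.

Lemma ip_compsum_all_source m : defined m -> (0 < m)%N ->
  ip psi0 (compsum_all m source) =
  E m * ip psi0 psi0 - (if m == 1%N then ip psi0 (app W psi0) else 0) +
  \sum_(2 <= k < m.+1) compsum k m (fun s => ip psi0 (source s)).
Proof.
move=> def_m m_gt0.
have comp_m : is_comp m [:: m] by rewrite /is_comp /= m_gt0 addn0 eqxx.
rewrite (compsum_all_additive _ _ (ip0r ip_linear psi0) (ipDr ip_linear psi0)).
rewrite /compsum_all big_ltn // big_ltn // compsum1 // [compsum 0 _ _]/=.
rewrite gtn_eqF // add0r; congr (_ + _).
have [_ -> _] := chain_cons_spec (def_m _ comp_m).
by rewrite ipDr // ipNr // ipZr //; case: (m == 1%N); rewrite ?ip0r.
Qed.

Lemma compsum_all_eigen_equation m : defined m -> (0 < m)%N ->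
  ip psi0 (compsum_all m source) = 0 ->
  dom H0 (compsum_all m term) /\
  app H0 (compsum_all m term) + app W (compsum_all m.-1 term) =
    \sum_(0 <= k < m.+1) E k *: compsum_all (m - k) term.
Proof.
move=> def_m m_gt0 source_orth.
have [dom_m] := compsum_all_resolvent def_m m_gt0.
rewrite Pbar0_id // compsum_all_source // => /eqP; rewrite subr_eq => /eqP ->.
by split => //; rewrite [RHS]big_ltn // subn0 addrAC subrK addrC.
Qed.

End PerturbationSeries.

Theorem mainTheorem5 (C : numClosedFieldType) (V : lmodType C) (ip : V -> V -> C)
  (H0 W : pop V) (E : nat -> C) (psi : nat -> V) (n : nat) :
  hilbert_space ip ->
  self_adjoint ip H0 -> self_adjoint ip W -> rel_bounded ip W H0 ->
  ip (psi 0%N) (psi 0%N) = 1 ->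
  dom H0 (psi 0%N) -> app H0 (psi 0%N) = E 0%N *: psi 0%N ->
  (forall x, dom H0 x -> app H0 x = E 0%N *: x -> exists c : C, x = c *: psi 0%N) ->
  (forall m, (1 <= m <= n)%N -> Pbar0 ip (psi 0%N) (psi m) = psi m) ->
  (forall m k (t : k.-tuple 'I_m.+1), (1 <= m <= n)%N -> (1 <= k <= m)%N ->
     is_comp m (map val t) ->
     chain ip H0 W (psi 0%N) (E 0%N) E (map val t) (psi 0%N) <> None) ->
  (forall m k (t : k.-tuple 'I_m.+1), (2 <= m <= n)%N -> (2 <= k <= m)%N ->
     is_comp m (map val t) ->
     termE ip H0 W (psi 0%N) (E 0%N) E (map val t) <> None) ->
  (1 <= n)%N -> E 1%N = ip (psi 0%N) (app W (psi 0%N)) ->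
  (forall m, (2 <= m <= n)%N ->
     E m = - \sum_(2 <= k < m.+1)
              \sum_(t : k.-tuple 'I_m.+1 | is_comp m (map val t))
                 ip (psi 0%N) (odflt 0 (termE ip H0 W (psi 0%N) (E 0%N) E (map val t)))) ->
  (forall m, (1 <= m <= n)%N ->
     psi m = \sum_(1 <= k < m.+1)
              \sum_(t : k.-tuple 'I_m.+1 | is_comp m (map val t))
                 odflt 0 (chain ip H0 W (psi 0%N) (E 0%N) E (map val t) (psi 0%N))) ->
  forall m, (1 <= m <= n)%N ->
    dom H0 (psi m) /\
    app H0 (psi m) + app W (psi m.-1) = \sum_(0 <= k < m.+1) E k *: psi (m - k)%N.
Proof.
move=> [[_ ip_linear _ _] _] [H0_linear _ _] [W_linear _ _] _ ip00 _ _ _ _ chain_def _ _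
  E1 E_rec psi_rec m m_ok; have /andP[m_gt0 m_le_n] := m_ok.
set psi0 := psi 0%N in ip00 chain_def E1 E_rec psi_rec *.
pose term s := odflt 0 (chain ip H0 W psi0 (E 0%N) E s psi0).
pose source s := odflt 0 (termE ip H0 W psi0 (E 0%N) E s).
have psiE i : (i <= n)%N -> psi i = compsum_all i term.
  case: i => [_|i i_le_n]; first by rewrite compsum_all0.
  rewrite psi_rec // /compsum_all [RHS]big_ltn //= add0r.
  by apply: eq_bigr => k _; apply: compsum_tuple.
have defined s : is_comp m s -> chain ip H0 W psi0 (E 0%N) E s psi0 <> None.
  move=> comp_s; have [t t_s] := comp_tuple comp_s.
  by rewrite -t_s; apply: chain_def; rewrite ?t_s //; apply: is_comp_size.
have source_orth : ip psi0 (compsum_all m source) = 0.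
  rewrite ip_compsum_all_source // ip00 mulr1.
  have [m_gt1|m_le1] := ltnP 1 m; last first.
    have -> : m = 1%N by lia.
    by rewrite E1 subrr add0r big_geq.
  rewrite gtn_eqF // subr0 E_rec ?m_gt1 //.
  apply/eqP; rewrite addrC subr_eq0; apply/eqP/eq_big_nat => k _.
  exact/esym/compsum_tuple.
have [dom_m eigen_m] :=
  compsum_all_eigen_equation H0_linear W_linear ip_linear defined m_gt0 source_orth.
rewrite (psiE m) // (psiE m.-1) ?(leq_trans (leq_pred m)) //; split => //.
rewrite eigen_m; apply: eq_big_nat => k _; rewrite psiE // (leq_trans (leq_subr k m)) //.
Qed.
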